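(* Let $d \ge 2$ and let $c_0,\dots,c_7 \in \mathbb{Z}_d$. The $d$-state first degree cellular automaton with parameters $\langle c_0,c_1,c_2,c_3,c_4,c_5,c_6,c_7\rangle$ is reversible for every number of cells $n \in \mathbb{N}$ (i.e. $G_n$ is a bijection of $\mathbb{Z}_d^n$ for every $n\ge 1$) if and only if all three of the following conditions hold: (1) $\gcd(c_5,d)=1$ (with $c_7$ arbitrary in $\mathbb{Z}_d$); (2) $c_0 \equiv c_1 \equiv c_2 \equiv c_3 \equiv 0 \pmod{\mathrm{rad}(d)}$; (3) $c_4 \cdot c_6 \equiv 0 \pmod{\mathrm{rad}(d)}$.
   Context: Fix an integer $d\ge 2$ and the state set $S=\mathbb{Z}_d=\{0,1,\dots,d-1\}$. A first degree cellular automaton (FDCA) with parameters $\langle c_0,\dots,c_7\rangle$, $c_i\in\mathbb{Z}_d$, is the one-dimensional 3-neighborhood cellular automaton whose local rule $R:S^3\to S$ is $R(x,y,z)=c_0xyz+c_1xy+c_2xz+c_3yz+c_4x+c_5y+c_6z+c_7 \pmod d$. For $n\in\mathbb{N}$, $n\ge1$, the $n$-cell automaton under the null boundary condition acts on configurations $x=(x_0,\dots,x_{n-1})\in S^n$ by the global map $G_n:S^n\to S^n$, $G_n(x)_i=R(x_{i-1},x_i,x_{i+1})$ for $0\le i\le n-1$, with the convention $x_{-1}=x_n=0$. The automaton is reversible for a given $n$ if $G_n$ is a bijection. $\mathrm{rad}(d)=\prod_{p\mid d,\ p\text{ prime}}p$ is the product of the distinct primes dividing $d$; since $\mathrm{rad}(d)\mid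 d$, congruences of elements of $\mathbb{Z}_d$ modulo $\mathrm{rad}(d)$ are well defined. *)

From mathcomp Require Import all_boot.
Set Implicit Arguments. Unset Strict Implicit. Unset Printing Implicit Defensive.

(* States: Z_d represented as 'I_d (d >= 2 assumed in the theorem);
   arithmetic is done on nat and reduced mod d. *)

Definition rad (d : nat) : nat := \prod_(p <- primes d) p.

Definition fdca_rule (d : nat) (c : 'I_8 -> 'I_d) (x y z : nat) : nat :=
  (c (inord 0) * x * y * z + c (inord 1) * x * y + c (inord 2) * x * z
   + c (inord 3) * y * z + c (inord 4) * x + c (inord 5) * y
   + c (inord 6) * z + c (inord 7)) %% d.

Definition cell (d n : nat) (x : {ffun 'I_n -> 'I_d}) (i : nat) : nat :=
  if (i < n) =P true is ReflectT h then nat_of_ord (x (Ordinal h)) else 0.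

(* global map G_n under null boundary: G_n(x)_i = R(x_{i-1}, x_i, x_{i+1}),
   with x_{-1} = x_n = 0 *)
Definition fdca_global (d n : nat) (c : 'I_8 -> 'I_d)
  (x : {ffun 'I_n -> 'I_d}) : {ffun 'I_n -> 'I_d} :=
  [ffun i : 'I_n =>
     (* the value is < d since it is reduced mod d (d > 0); insubd only
        serves to package it as an element of 'I_d *)
     insubd (x i) (fdca_rule c (if i == 0 :> nat then 0 else cell x i.-1)
                               (cell x i) (cell x i.+1))].

Definition fdca_reversible (d n : nat) (c : 'I_8 -> 'I_d) : Prop :=
  bijective (@fdca_global d n c).

(* Reducing modulo a prime p dividing d turns a reversible automaton into one
   over the field F_p whose global maps are injective for every length n.
   Explicit colliding configurations of lengths 1, 2, 3 and 6 then force
   c5 <> 0 and c0 = c1 = c2 = c3 = 0 in F_p (length 3 uses the finiteness of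
   F_p: the middle output leaves too many configurations in one fibre).  If
   moreover c4 c6 <> 0, the recurrence c4 v_(i-1) + c5 v_i + c6 v_(i+1) = 0 is
   periodic over F_p, so it has a solution with v_(-1) = 0, v_0 = 1 and v_n = 0
   for some n > 0; then (v_0, ..., v_(n-1)) is a nonzero configuration with the
   same image as the zero one.
   Conversely, under the three conditions, two configurations with the same
   image that agree modulo p^k agree modulo p^(k+1): the difference quotient
   satisfies, modulo p, a tridiagonal linear system with invertible diagonal c5
   and c4 c6 = 0, which only has the trivial solution.  Going up to the exact
   power of every prime divisor of d gives agreement modulo d. *)

From mathcomp Require Import all_boot ssralg ssrint intdiv zmodp finalg.
From mathcomp Require Import ring zify.
Set Implicit Arguments. Unset Strict Implicit. Unset Printing Implicit Defensive.
Import GRing.Theory.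
Local Open Scope ring_scope.

Section RingAutomaton.
Variables (R : comNzRingType) (a : nat -> R).

Definition ring_rule (x y z : R) : R :=
  a 0 * x * y * z + a 1 * x * y + a 2 * x * z + a 3 * y * z
  + a 4 * x + a 5 * y + a 6 * z + a 7.

Definition left_nbr (e : nat -> R) (i : nat) : R := if i is j.+1 then e j else 0.

Definition seq_global (s : seq R) : seq R :=
  [seq ring_rule (left_nbr (nth 0 s) i) (nth 0 s i) (nth 0 s i.+1) | i <- iota 0 (size s)].

Definition seq_injective (n : nat) : Prop :=
  forall s t, seq_global s = seq_global t -> size s = n -> size t = n -> s = t.

Lemma size_seq_global s : size (seq_global s) = size s.
Proof. by rewrite size_map size_iota. Qed.

Lemma nth_seq_global s i : (i < size s)%N ->
  nth 0 (seq_global s) i = ring_rule (left_nbr (nth 0 s) i) (nth 0 s i) (nth 0 s i.+1).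
Proof. by move=> lt_is; rewrite (nth_map 0%N) ?size_iota // nth_iota. Qed.

Lemma seq_global_tupleP n (t : n.-tuple R) : size (seq_global t) == n.
Proof. by rewrite size_seq_global size_tuple. Qed.
Canonical seq_global_tuple n (t : n.-tuple R) := Tuple (seq_global_tupleP t).

End RingAutomaton.

Section FieldCoefficients.
Variables (F : fieldType) (a : nat -> F).

Lemma coef5_neq0 : seq_injective a 1 -> a 5 != 0.
Proof.
move=> inj1; apply/eqP => a5.
have E : seq_global a [:: 0] = seq_global a [:: 1].
  by rewrite /seq_global /= /ring_rule a5; congr [:: _]; ring.
by have [/eqP] := inj1 _ _ E erefl erefl; rewrite eq_sym oner_eq0.
Qed.

Lemma coef3_eq0 : seq_injective a 2 -> a 3 = 0.
Proof.
move=> inj2; apply/eqP; apply: contraT => a3.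
(* With x0 = al the first output no longer depends on x1, with x1 = be it no
   longer depends on x0. *)
pose al := - a 6 / a 3; pose be := - a 5 / a 3; pose s := a 1 * al + a 5.
have [s0|s0] := eqVneq s 0.
  have E : seq_global a [:: al; 0] = seq_global a [:: al; 1].
    rewrite /seq_global /= /ring_rule; congr [:: _; _].
      by rewrite /al; field.
    have -> : a 5 = - (a 1 * al) by apply/eqP; rewrite -addr_eq0 addrC -/s s0.
    by ring.
  by have [/eqP] := inj2 _ _ E erefl erefl; rewrite eq_sym oner_eq0.
pose y := (ring_rule a (al + 1) be 0 - (a 4 * al + a 7)) / s.
have E : seq_global a [:: al + 1; be] = seq_global a [:: al; y].
  rewrite /seq_global /=; congr [:: _; _].
    by rewrite /ring_rule /al /be; field.
  by rewrite /y /s; set r := ring_rule _ _ _ _; rewrite /ring_rule; field.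
have [/eqP] := inj2 _ _ E erefl erefl.
by rewrite -subr_eq0 addrC addKr oner_eq0.
Qed.

Lemma coef1_eq0 : seq_injective a 2 -> a 3 = 0 -> a 5 != 0 -> a 1 = 0.
Proof.
move=> inj2 a3 a5; apply/eqP; apply: contraT => a1.
pose al := - a 5 / a 1; pose be := - a 4 / a 1.
have E : seq_global a [:: al; be + 1] = seq_global a [:: al + a 6 / a 5; be].
  by rewrite /seq_global /= /ring_rule a3 /al /be; congr [:: _; _]; field; apply/andP.
have [_ /eqP] := inj2 _ _ E erefl erefl.
by rewrite -subr_eq0 addrC addKr oner_eq0.
Qed.

Lemma coef2_eq0 : seq_injective a 6 -> a 0 = 0 -> a 1 = 0 -> a 3 = 0 -> a 2 = 0.
Proof.
move=> inj6 a0 a1 a3; apply/eqP; apply: contraT => a2.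
pose x0 := - a 6 / a 2; pose x1 := (a 5 - a 6) / a 2.
pose x4 := (a 5 - a 4) / a 2; pose x5 := - a 4 / a 2.
have E : seq_global a [:: x0; x1; 0; 0; x4; x5] = seq_global a [:: x0; x1; 1; -1; x4; x5].
  rewrite /seq_global /= /ring_rule a0 a1 a3 /x0 /x1 /x4 /x5.
  by congr [:: _; _; _; _; _; _]; field.
by have [/eqP] := inj6 _ _ E erefl erefl; rewrite eq_sym oner_eq0.
Qed.

End FieldCoefficients.

Section MiddleCellDegenerate.
Variables (F : finFieldType) (a : nat -> F).
Hypotheses (a1 : a 1 = 0) (a3 : a 3 = 0) (a0 : a 0 != 0) (a5 : a 5 != 0).

(* In a configuration [:: x0; x1; x2] the middle output is affine in x1 with
   slope a0 x0 x2 + a5, which vanishes exactly when x0 x2 = k. *)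
Let k := - a 5 / a 0.
Let t := ring_rule a 1 0 k.

Lemma k_neq0 : k != 0.
Proof. by rewrite mulf_neq0 ?oppr_eq0 ?invr_eq0. Qed.

Definition middle_fiber (w : F * F) : seq F :=
  if w.1 * w.2 == k then [:: 1; w.1; k]
  else [:: w.1; (t - (a 2 * w.1 * w.2 + a 4 * w.1 + a 6 * w.2 + a 7))
                / (a 0 * w.1 * w.2 + a 5); w.2].

Lemma middle_fiberP w : exists x0 x1 x2,
  middle_fiber w = [:: x0; x1; x2] /\ ring_rule a x0 x1 x2 = t.
Proof.
rewrite /middle_fiber; case: ifPn => wk.
  by exists 1, w.1, k; split; rewrite // /t /ring_rule a1 a3 /k; field.
have slope0 : a 0 * w.1 * w.2 + a 5 != 0.
  rewrite (_ : _ + _ = a 0 * (w.1 * w.2 - k)); first by rewrite mulf_neq0 ?subr_eq0.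
  by rewrite /k; field.
do 3 eexists; split; first reflexivity.
by rewrite /ring_rule a1 a3; field.
Qed.

Lemma middle_fiber_inj : injective middle_fiber.
Proof.
move=> [u v] [u' v']; rewrite /middle_fiber /=.
case: ifPn => uvk; case: ifPn => uvk' //.
- case=> eq_u; subst u'.
  have u0 : u != 0 by apply: contraTneq uvk => ->; rewrite mul0r eq_sym k_neq0.
  by rewrite (mulfI u0 (etrans (eqP uvk') (esym (eqP uvk)))).
- by case=> eu _ ev; rewrite -eu -ev mul1r eqxx in uvk'.
- by case=> eu _ ev; rewrite eu ev mul1r eqxx in uvk.
- by case=> -> _ ->.
Qed.

Lemma not_seq_injective3 : ~ seq_injective a 3.
Proof.
move=> inj3.
pose outer (s : seq F) := (nth 0 (seq_global a s) 0, nth 0 (seq_global a s) 2).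
have globalE w : seq_global a (middle_fiber w) =
    [:: (outer (middle_fiber w)).1; t; (outer (middle_fiber w)).2].
  by have [x0 [x1 [x2 [-> tE]]]] := middle_fiberP w; rewrite /outer /seq_global /= tE.
have size_fiber w : size (middle_fiber w) = 3%N.
  by have [x0 [x1 [x2 [-> _]]]] := middle_fiberP w.
have outer_inj : injective (outer \o middle_fiber).
  move=> w w' eq_out; apply: middle_fiber_inj; apply: inj3; rewrite ?size_fiber //.
  by move: eq_out => /= eq_out; rewrite globalE [RHS]globalE eq_out.
(* Injective on the finite F * F, the outer outputs of the fibre are onto, so
   [:: 1; 0; k], which is not in the fibre family, collides with a member. *)
have /codomP [w ow] := injF_onto outer_inj (outer [:: 1; 0; k]).
have E : seq_global a (middle_fiber w) = seq_global a [:: 1; 0; k].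
  by rewrite globalE -[outer (middle_fiber w)]/((outer \o middle_fiber) w) -ow.
have := inj3 _ _ E (size_fiber w) erefl; rewrite /middle_fiber.
case: ifPn => [wk [w0]|wk [w1 _ w2]].
  by rewrite w0 mul0r eq_sym (negbTE k_neq0) in wk.
by rewrite w1 w2 mul1r eqxx in wk.
Qed.

End MiddleCellDegenerate.

Section AffineCycle.
Variables (F : finFieldType) (a : nat -> F).
Hypotheses (a0 : a 0 = 0) (a1 : a 1 = 0) (a2 : a 2 = 0) (a3 : a 3 = 0).
Hypotheses (a4 : a 4 != 0) (a6 : a 6 != 0).

(* The companion map of the recurrence a4 v_(i-1) + a5 v_i + a6 v_(i+1) = 0;
   it is a permutation of F * F, so the orbit of (0, 1) returns to (0, 1). *)
Let step (w : F * F) : F * F := (w.2, - (a 4 * w.1 + a 5 * w.2) / a 6).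
Let state i := iter i step (0, 1).
Let v i := (state i).2.

Lemma step_inj : injective step.
Proof.
move=> [x y] [x' y'] [/= <-] /(mulIf (invr_neq0 a6)) /oppr_inj /addIr /(mulfI a4).
by move=> ->.
Qed.

Lemma left_nbr_state i : left_nbr v i = (state i).1.
Proof. by case: i. Qed.

Lemma state_recurrence i : a 4 * left_nbr v i + a 5 * v i + a 6 * v i.+1 = 0.
Proof. by rewrite left_nbr_state /v /state iterS /=; field. Qed.

Lemma state_cycle : exists2 n, (0 < n)%N & v n = 0.
Proof.
have ret := iter_order step_inj (0, 1); set N := order step (0, 1) in ret.
have N1 : N != 1%N by apply/eqP => N1; move: ret; rewrite N1 => -[/eqP]; rewrite oner_eq0.
have [n Nn] : exists n, N = n.+1 by exists N.-1; rewrite prednK ?order_gt0.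
exists n; first by move: N1; rewrite Nn; case: n {Nn}.
by rewrite /v -[(state n).2]/(state n.+1).1 -Nn /state ret.
Qed.

Lemma not_seq_injective_affine : ~ (forall n, (0 < n)%N -> seq_injective a n).
Proof.
move=> inj; have [n n0 vn] := state_cycle.
have nth_v j : (j <= n)%N -> nth 0 (mkseq v n) j = v j.
  rewrite leq_eqVlt => /predU1P [->|]; last exact: nth_mkseq.
  by rewrite nth_default ?size_mkseq.
have E : seq_global a (mkseq v n) = seq_global a (nseq n 0).
  rewrite /seq_global size_mkseq size_nseq; apply/eq_in_map => i.
  rewrite mem_iota add0n => /andP[_ lt_in].
  have -> : left_nbr (nth 0 (nseq n (0 : F))) i = 0.
    by case: i {lt_in} => //= i; rewrite nth_nseq if_same.
  have -> : left_nbr (nth 0 (mkseq v n)) i = left_nbr v i.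
    by case: i lt_in => //= i lt_in; rewrite nth_v //; lia.
  rewrite !nth_nseq !if_same (nth_v i (ltnW lt_in)) (nth_v i.+1 lt_in).
  rewrite /ring_rule a0 a1 a2 a3.
  transitivity (a 4 * left_nbr v i + a 5 * v i + a 6 * v i.+1 + a 7); first by ring.
  by rewrite state_recurrence; ring.
have := inj n n0 _ _ E (size_mkseq _ _) (size_nseq _ _).
move/(congr1 (nth 0 ^~ 0%N)); rewrite nth_mkseq // nth_nseq n0 /v /= => /eqP.
by rewrite oner_eq0.
Qed.

End AffineCycle.

Lemma field_coef_conditions (F : finFieldType) (a : nat -> F) :
  (forall n, (0 < n)%N -> seq_injective a n) ->
  [/\ a 5 != 0, [/\ a 0 = 0, a 1 = 0, a 2 = 0 & a 3 = 0] & a 4 * a 6 = 0].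
Proof.
move=> inj.
have a5 := coef5_neq0 (inj 1%N erefl).
have a3 := coef3_eq0 (inj 2%N erefl).
have a1 := coef1_eq0 (inj 2%N erefl) a3 a5.
have a0 : a 0 = 0.
  by apply/eqP; apply: contraT => a0; case: (not_seq_injective3 a1 a3 a0 a5 (inj 3%N erefl)).
have a2 := coef2_eq0 (inj 6%N erefl) a0 a1 a3.
split=> //; apply/eqP; rewrite mulf_eq0; apply: contraT; rewrite negb_or => /andP[a4 a6].
by case: (not_seq_injective_affine a0 a1 a2 a3 a4 a6 inj).
Qed.

Lemma surjF_inj (T : finType) (f : T -> T) : (forall y, exists x, f x = y) -> injective f.
Proof.
move=> f_surj.
have fS y : exists x, f x == y by have [x <-] := f_surj y; exists x.
pose g y := xchoose (fS y).
have fK : cancel g f by move=> y; apply/eqP; exact: (xchooseP (fS y)).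
have [g' _ Kg'] := injF_bij (can_inj fK).
have fE x : f x = g' x by rewrite -{1}(Kg' x) fK.
by apply: (can_inj (g := g)) => x; rewrite fE Kg'.
Qed.

Section Cells.
Variables (d n : nat) (c : 'I_8 -> 'I_d).

Definition fdca_poly (x y z : nat) : nat :=
  c (inord 0) * x * y * z + c (inord 1) * x * y + c (inord 2) * x * z
  + c (inord 3) * y * z + c (inord 4) * x + c (inord 5) * y
  + c (inord 6) * z + c (inord 7).

Definition fdca_coef {R : comNzRingType} (j : nat) : R := (c (inord j) : nat)%:R.

Definition cellR (R : comNzRingType) (x : {ffun 'I_n -> 'I_d}) (k : nat) : R :=
  (cell x k)%:R.

Lemma cell_ord (x : {ffun 'I_n -> 'I_d}) (i : 'I_n) : cell x i = x i.
Proof.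
rewrite /cell; case: eqP => [lt_in|]; last by rewrite ltn_ord.
by congr (nat_of_ord (x _)); apply: val_inj.
Qed.

Lemma cell_lt (x : {ffun 'I_n -> 'I_d}) k : (0 < d)%N -> (cell x k < d)%N.
Proof. by rewrite /cell; case: eqP. Qed.

Lemma cell_out (x : {ffun 'I_n -> 'I_d}) k : (n <= k)%N -> cell x k = 0%N.
Proof. by rewrite /cell; case: eqP => // lt_kn; rewrite leqNgt lt_kn. Qed.

Lemma fdca_globalE x (i : 'I_n) : (0 < d)%N ->
  fdca_global c x i =
    (fdca_poly (if i == 0 :> nat then 0 else cell x i.-1) (cell x i) (cell x i.+1) %% d)%N
    :> nat.
Proof. by move=> d0; rewrite ffunE insubdK // unfold_in /fdca_rule ltn_pmod. Qed.

Lemma natr_fdca_poly (R : comNzRingType) x (i : nat) :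
  (fdca_poly (if i == 0 then 0 else cell x i.-1) (cell x i) (cell x i.+1))%:R =
    ring_rule (@fdca_coef R) (left_nbr (cellR R x) i) (cellR R x i) (cellR R x i.+1).
Proof. by case: i => [|i]; rewrite !natrD !natrM. Qed.

End Cells.

Section Reduction.
Variables (p d n : nat) (c : 'I_8 -> 'I_d).
Hypotheses (p_pr : prime p) (p_d : (p %| d)%N) (d0 : (0 < d)%N).

Definition reduce (x : {ffun 'I_n -> 'I_d}) : seq 'F_p := mkseq (cellR 'F_p x) n.

Lemma nth_reduce x k : nth 0 (reduce x) k = cellR 'F_p x k.
Proof.
have [lt_kn|le_nk] := ltnP k n; first by rewrite nth_mkseq.
by rewrite nth_default ?size_mkseq // /cellR cell_out.
Qed.

Lemma reduce_global x :
  reduce (fdca_global c x) = seq_global (fdca_coef c) (reduce x).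
Proof.
apply: (@eq_from_nth _ 0); first by rewrite size_seq_global !size_mkseq.
rewrite size_mkseq => i lt_in; rewrite nth_seq_global ?size_mkseq //.
rewrite nth_reduce /cellR (cell_ord _ (Ordinal lt_in)) fdca_globalE //=.
rewrite -(Fp_nat_mod p_pr) (modn_dvdm _ p_d) (Fp_nat_mod p_pr) natr_fdca_poly.
by rewrite !nth_reduce; case: i {lt_in} => //= i; rewrite nth_reduce.
Qed.

Lemma reduce_surj (s : seq 'F_p) : size s = n -> exists x, reduce x = s.
Proof.
move=> s_n; exists [ffun i : 'I_n => insubd (Ordinal d0) (nat_of_ord (nth 0 s i))].
apply: (@eq_from_nth _ 0); rewrite size_mkseq // => k lt_kn.
rewrite nth_reduce /cellR (cell_ord _ (Ordinal lt_kn)) ffunE /=.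
have lt_sd : (nat_of_ord (nth 0%R s k) < d)%N.
  have le_pd : ((Zp_trunc (pdiv p)).+2 <= d)%N by rewrite Fp_cast // dvdn_leq.
  exact: leq_trans (ltn_ord _) le_pd.
by rewrite insubdK // natr_Zp.
Qed.

Lemma seq_injective_of_reversible :
  @fdca_reversible d n c -> seq_injective (@fdca_coef _ c 'F_p) n.
Proof.
case=> g _ gG.
have surj (t : n.-tuple 'F_p) :
    exists u : n.-tuple 'F_p, [tuple of seq_global (fdca_coef c) u] = t.
  have [y yt] := reduce_surj (size_tuple t).
  have reduce_n : size (reduce (g y)) == n by rewrite size_mkseq.
  by exists (Tuple reduce_n); apply: val_inj; rewrite /= -reduce_global gG.
move=> s t E s_n t_n.
pose ts := Tuple (introT eqP s_n); pose tt := Tuple (introT eqP t_n).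
by apply: (congr1 val (@surjF_inj _ _ surj ts tt _)); apply: val_inj.
Qed.

End Reduction.

Lemma tridiagonal_eq0 (R : idomainType) (A B C : R) (e : nat -> R) n :
  B != 0 -> A * C = 0 -> (forall j, (n <= j)%N -> e j = 0) ->
  (forall i, (i < n)%N -> A * left_nbr e i + B * e i + C * e i.+1 = 0) ->
  forall i, e i = 0.
Proof.
move=> B0 AC0 e_out e_eq.
have Be0 i : B * e i = 0 -> e i = 0 by move/eqP; rewrite mulf_eq0 (negbTE B0) => /eqP.
have [A0|A0] := eqVneq A 0.
  suff e_from m i : (n - m <= i)%N -> e i = 0.
    by move=> i; apply: (e_from n); rewrite subnn.
  elim: m i => [|m IH] i le_i; first by apply: e_out; rewrite subn0 in le_i.
  have [|lt_i] := leqP (n - m) i; first exact: IH.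
  apply: Be0; move: (e_eq i (leq_trans lt_i (leq_subr _ _))).
  by rewrite A0 mul0r add0r (IH i.+1) ?mulr0 ?addr0 //; lia.
have C0 : C = 0 by move/eqP: AC0; rewrite mulf_eq0 (negbTE A0) => /eqP.
elim/ltn_ind => i IH; have [lt_in|] := ltnP i n; last exact: e_out.
apply: Be0; move: (e_eq i lt_in); rewrite C0 mul0r addr0.
by case: i IH lt_in => [|i] IH _ //=; rewrite ?mulr0 ?add0r // IH ?mulr0 ?add0r.
Qed.

Lemma dvdz_subM (D u u' v v' : int) :
  (D %| u - u')%Z -> (D %| v - v')%Z -> (D %| u * v - u' * v')%Z.
Proof.
move=> Du Dv; rewrite (_ : _ - _ = (u - u') * v + u' * (v - v')); last by ring.
by apply: rpredD; [apply: dvdz_mulr | apply: dvdz_mull].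
Qed.

Lemma dvdz_ring_rule_sub (q D : int) (C : nat -> int) l m r l' m' r' :
  (forall j, (j < 4)%N -> (q %| C j)%Z) ->
  (D %| l - l')%Z -> (D %| m - m')%Z -> (D %| r - r')%Z ->
  (q * D %| ring_rule C l m r - ring_rule C l' m' r'
              - (C 4%N * (l - l') + C 5%N * (m - m') + C 6%N * (r - r')))%Z.
Proof.
move=> qC Dl Dm Dr.
have -> : ring_rule C l m r - ring_rule C l' m' r'
            - (C 4%N * (l - l') + C 5%N * (m - m') + C 6%N * (r - r')) =
          C 0%N * (l * m * r - l' * m' * r') + C 1%N * (l * m - l' * m')
          + C 2%N * (l * r - l' * r') + C 3%N * (m * r - m' * r').
  by rewrite /ring_rule; ring.
by rewrite !rpredD // dvdz_mul ?qC //; do ?apply: dvdz_subM.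
Qed.

Section Lifting.
Variables (p : nat) (D : int) (n : nat) (C X Y : nat -> int).
Hypothesis p_pr : prime p.
Hypotheses (pC : forall j, (j < 4)%N -> (p%:Z %| C j)%Z)
           (pC46 : (p%:Z %| C 4%N * C 6%N)%Z) (pC5 : ~~ (p%:Z %| C 5%N)%Z).
Hypothesis XY_out : forall j, (n <= j)%N -> X j = Y j.
Hypothesis D_rule : forall i, (i < n)%N ->
  (D %| ring_rule C (left_nbr X i) (X i) (X i.+1)
        - ring_rule C (left_nbr Y i) (Y i) (Y i.+1))%Z.

Lemma lift_step (t : int) : t != 0 -> (p%:Z * t %| D)%Z ->
  (forall j, (t %| X j - Y j)%Z) -> forall j, (p%:Z * t %| X j - Y j)%Z.
Proof.
move=> t0 ptD tXY.
pose e j := ((X j - Y j) %/ t)%Z.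
have eE j : X j - Y j = e j * t by rewrite divzK.
have left_eE i : left_nbr X i - left_nbr Y i = left_nbr e i * t.
  by case: i => [|i] /=; rewrite ?subrr ?mul0r.
have p_lin i : (i < n)%N ->
    (p%:Z %| C 4%N * left_nbr e i + C 5%N * e i + C 6%N * e i.+1)%Z.
  move=> lt_in; rewrite -(dvdz_mul2r t0).
  have -> : (C 4%N * left_nbr e i + C 5%N * e i + C 6%N * e i.+1) * t =
      C 4%N * (left_nbr X i - left_nbr Y i) + C 5%N * (X i - Y i)
      + C 6%N * (X i.+1 - Y i.+1).
    by rewrite left_eE !eE; ring.
  rewrite -[X in (_ %| X)%Z](subKr (ring_rule C (left_nbr X i) (X i) (X i.+1)
                                   - ring_rule C (left_nbr Y i) (Y i) (Y i.+1))).
  rewrite rpredD ?rpredN ?(dvdz_trans ptD (D_rule lt_in)) //.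
  by rewrite dvdz_ring_rule_sub ?left_eE ?dvdz_mull.
have chp := pchar_Fp p_pr.
have e0 : forall j, ((e j)%:~R : 'F_p) = 0.
  apply: (@tridiagonal_eq0 _ (C 4%N)%:~R (C 5%N)%:~R (C 6%N)%:~R _ n).
  - by rewrite -(dvdz_pcharf chp).
  - by apply/eqP; rewrite -intrM -(dvdz_pcharf chp).
  - by move=> j le_nj; rewrite /e XY_out // subrr div0z.
  - move=> i lt_in; apply/eqP; move: (p_lin i lt_in); rewrite (dvdz_pcharf chp).
    by rewrite !intrD !intrM; case: i {lt_in}.
by move=> j; rewrite eE dvdz_mul ?dvdzz // (dvdz_pcharf chp) e0.
Qed.

Lemma lift_congruence k : (p ^ k %| `|D|)%N -> forall j, ((p%:Z) ^+ k %| X j - Y j)%Z.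
Proof.
elim: k => [|k IH] pkD j; first by rewrite expr0 dvd1z.
rewrite exprS; apply: lift_step => //.
- by rewrite expf_neq0 // eqz_nat -lt0n prime_gt0.
- by rewrite -exprS dvdzE abszX.
- by apply: IH; apply: dvdn_trans pkD; rewrite expnS dvdn_mull.
Qed.

End Lifting.

Local Close Scope ring_scope.

Lemma dvdn_prod_primes (s : seq nat) m : uniq s -> all prime s ->
  {in s, forall p, p %| m} -> \prod_(p <- s) p %| m.
Proof.
elim: s => [|q s IH] /=; first by rewrite big_nil dvd1n.
case/andP=> q_s s_uniq /andP[q_pr s_pr] s_m; rewrite big_cons Gauss_dvd.
  by rewrite s_m ?mem_head // IH // => p p_s; apply: s_m; rewrite inE p_s orbT.
rewrite prime_coprime // Euclid_dvd_prod // big_has; apply/hasPn => p p_s.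
by rewrite dvdn_prime2 //; [apply: contraNneq q_s => -> | apply: (allP s_pr)].
Qed.

Lemma rad_dvdP d m : 0 < d ->
  reflect (forall p, prime p -> p %| d -> p %| m) (rad d %| m).
Proof.
move=> d0; apply: (iffP idP) => [rad_m p p_pr p_d | primes_m].
  apply: dvdn_trans rad_m; rewrite /rad (big_rem p) ?dvdn_mulr //.
  by rewrite mem_primes p_pr d0.
apply: dvdn_prod_primes; first exact: primes_uniq.
  by apply/allP => p; rewrite mem_primes => /andP[].
by move=> p; rewrite mem_primes => /and3P[p_pr _]; apply: primes_m.
Qed.

Lemma coprime_primesP m d : 0 < d ->
  reflect (forall p, prime p -> p %| d -> ~~ (p %| m)) (coprime m d).
Proof.
move=> d0; apply: (iffP idP) => [md p p_pr p_d | primes_m].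
  by rewrite -prime_coprime // coprime_sym (coprime_dvdr p_d md).
apply: contraT; rewrite /coprime => g1.
have g_gt1 : 1 < gcdn m d by rewrite ltn_neqAle eq_sym g1 gcdn_gt0 d0 orbT.
have := primes_m _ (pdiv_prime g_gt1) (dvdn_trans (pdiv_dvd _) (dvdn_gcdr _ _)).
by rewrite (dvdn_trans (pdiv_dvd _) (dvdn_gcdl _ _)).
Qed.

Definition fdca_conditions d (c : 'I_8 -> 'I_d) (p : nat) : Prop :=
  [/\ ~~ (p %| c (inord 5)),
      [/\ p %| c (inord 0), p %| c (inord 1), p %| c (inord 2) & p %| c (inord 3)]
    & p %| c (inord 4) * c (inord 6)].

Lemma fdca_conditions_primesP d (c : 'I_8 -> 'I_d) : 0 < d ->
  [/\ coprime (c (inord 5)) d,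
      [/\ rad d %| c (inord 0), rad d %| c (inord 1),
          rad d %| c (inord 2) & rad d %| c (inord 3)]
    & rad d %| c (inord 4) * c (inord 6)]
  <-> (forall p, prime p -> p %| d -> fdca_conditions c p).
Proof.
move=> d0; split.
  case=> /(coprime_primesP _ d0) c5 [] /(rad_dvdP _ d0) c0 /(rad_dvdP _ d0) c1
    /(rad_dvdP _ d0) c2 /(rad_dvdP _ d0) c3 /(rad_dvdP _ d0) c46 p p_pr p_d.
  by split; [|split|]; [apply: c5|apply: c0|apply: c1|apply: c2|apply: c3|apply: c46].
move=> cond; split.
- by apply/(coprime_primesP _ d0) => p p_pr p_d; case: (cond p p_pr p_d).
- by split; apply/(rad_dvdP _ d0) => p p_pr p_d; case: (cond p p_pr p_d) => _ [].
- by apply/(rad_dvdP _ d0) => p p_pr p_d; case: (cond p p_pr p_d).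
Qed.

Lemma fdca_conditions_of_reversible p d (c : 'I_8 -> 'I_d) :
  prime p -> p %| d -> 0 < d ->
  (forall n, 0 < n -> @fdca_reversible d n c) -> fdca_conditions c p.
Proof.
move=> p_pr p_d d0 rev.
have [a5 [a0 a1 a2 a3] a46] :=
  field_coef_conditions (fun n n0 => seq_injective_of_reversible p_pr p_d d0 (rev n n0)).
have chp := pchar_Fp p_pr.
rewrite /fdca_conditions !(dvdn_pcharf chp) natrM.
by rewrite -!/(@fdca_coef _ c 'F_p _) a0 a1 a2 a3 a46 (negbTE a5) !eqxx.
Qed.

Lemma fdca_global_inj d n (c : 'I_8 -> 'I_d) : 0 < d ->
  (forall p, prime p -> p %| d -> fdca_conditions c p) -> injective (@fdca_global d n c).
Proof.
move=> d0 cond x y E.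
pose X := cellR int x; pose Y := cellR int y; pose C := @fdca_coef _ c int.
have D_rule i : i < n -> (d%:Z %| ring_rule C (left_nbr X i) (X i) (X i.+1)
                                  - ring_rule C (left_nbr Y i) (Y i) (Y i.+1))%R%Z.
  move=> lt_in; rewrite -!natr_fdca_poly -eqz_mod_dvd !natz !modz_nat.
  have := congr1 (fun f : {ffun 'I_n -> 'I_d} => nat_of_ord (f (Ordinal lt_in))) E.
  by rewrite /= !fdca_globalE // => ->.
have dvd_XY j : (d%:Z %| X j - Y j)%R%Z.
  rewrite dvdzE; apply/(dvdn_partP _ d0) => p; rewrite mem_primes => /and3P[p_pr _ p_d].
  have [c5 [c0 c1 c2 c3] c46] := cond p p_pr p_d.
  suff: (Posz p ^+ logn p d %| X j - Y j)%R%Z by rewrite dvdzE abszX p_part.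
  apply: (lift_congruence (D := d%:Z) (n := n) (C := C)) => //.
  - by case=> [|[|[|[|j']]]] //= _; rewrite /C /fdca_coef natz.
  - by rewrite /C /fdca_coef -natrM natz.
  - by rewrite /C /fdca_coef natz.
  - by move=> j' le_nj; rewrite /X /Y /cellR !cell_out.
  - exact: pfactor_dvdnn.
apply/ffunP => i; apply: val_inj; rewrite /= -!cell_ord.
move: (dvd_XY i); rewrite -eqz_mod_dvd /X /Y /cellR !natz !modz_nat.
by rewrite !modn_small ?cell_lt // => /eqP [].
Qed.

Theorem theorem1 (d : nat) (c : 'I_8 -> 'I_d) :
  1 < d ->
  ((forall n : nat, 0 < n -> @fdca_reversible d n c) <->
   [/\ coprime (c (inord 5)) d,
       [/\ rad d %| c (inord 0), rad d %| c (inord 1),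
           rad d %| c (inord 2) & rad d %| c (inord 3)]
     & rad d %| c (inord 4) * c (inord 6)]).
Proof.
move=> d1; have d0 : 0 < d := ltnW d1.
apply: iff_trans (iff_sym (fdca_conditions_primesP c d0)).
split=> [rev p p_pr p_d | cond n _]; first exact: fdca_conditions_of_reversible.
exact/injF_bij/fdca_global_inj.
Qed.
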